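(* Define, for $(\Omega,\beta_1,\beta_2)\in(-\pi,\pi]\times(0,\pi)\times(0,\pi)$ (with $\Omega$ understood modulo $2\pi$), $$\mathfrak{L}_1(\Omega,\beta_1,\beta_2)=\tfrac18\sin^2\beta_2\,(3+\cos 2\beta_1)+\tfrac12\sin^2\beta_1\cos^2\beta_2-\tfrac12\cos\Omega\,\sin\beta_1\sin^2\tfrac{\beta_1}{2}\,\sin 2\beta_2 .$$ Then $\mathfrak{L}_1$ has exactly the following eight critical points (points where $\nabla\mathfrak{L}_1=0$), with the indicated values and types: 1. $(\pm\tfrac{\pi}{2},\tfrac{\pi}{2},\tfrac{\pi}{2})$: value $1/4$, saddle points. 2. $\big(\pi,\arccos\tfrac{-1+\sqrt5}{2},\ \pi-\tfrac12\arctan(2\sqrt{2+\sqrt5})\big)$ and $\big(0,\arccos\tfrac{-1+\sqrt5}{2},\ \tfrac12\arctan(2\sqrt{2+\sqrt5})\big)$: value $1/4$, saddle points. 3. $\big(\pi,\arccos\tfrac{1+\sqrt6}{5},\ \tfrac12\arccos\tfrac{1}{1-\sqrt6}\big)$ and $\big(0,\arccos\tfrac{1+\sqrt6}{5},\ \pi-\tfrac12\arccos\tfrac{1}{1-\sqrt6}\big)$: value $\tfrac{3}{50}(9-\sqrt6)\approx0.393$, saddle points. 4. $\big(\pi,\arccos\tfrac{1-\sqrt6}{5},\ \tfrac12\arccos\tfrac{1}{1+\sqrt6}\big)$ and $\big(0,\arccos\tfrac{1-\sqrt6}{5},\ \pi-\tfrac12\arccos\tfrac{1}{1+\sqrt6}\big)$: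 value $\tfrac{3}{50}(9+\sqrt6)\approx0.687$, global maxima of $\mathfrak{L}_1$ on its domain.
   Context: A saddle point is a critical point at which the Hessian is indefinite (has both a strictly positive and a strictly negative eigenvalue). Motivation (not needed for the claim): $\mathfrak{L}_1(\alpha_1+\gamma_2,\beta_1,\beta_2)$ equals the measurement-assisted transition probability $\langle 2|U_2\,\mathcal M_1(U_1|1\rangle\langle1|U_1^\dagger)U_2^\dagger|2\rangle$ with $U_i=e^{-i\alpha_iJ_z}e^{-i\beta_iJ_y}e^{-i\gamma_iJ_z}$, where $J_y,J_z$ are the spin-1 matrices and $\mathcal M_1(\rho)=P\rho P+(\mathbb I-P)\rho(\mathbb I-P)$, $P=|1\rangle\langle1|$. *)

From Stdlib Require Import Reals.
From Coquelicot Require Import Coquelicot.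
Open Scope R_scope.

Definition L1 (O b1 b2 : R) : R :=
  1/8 * (sin b2)^2 * (3 + cos (2 * b1))
  + 1/2 * (sin b1)^2 * (cos b2)^2
  - 1/2 * cos O * sin b1 * (sin (b1 / 2))^2 * sin (2 * b2).

Definition pt := (R * R * R)%type.

Definition coord (p : pt) (i : nat) : R :=
  match i with 0%nat => fst (fst p) | 1%nat => snd (fst p) | _ => snd p end.

Definition upd (p : pt) (i : nat) (t : R) : pt :=
  match i with
  | 0%nat => (t, snd (fst p), snd p)
  | 1%nat => (fst (fst p), t, snd p)
  | _ => (fst (fst p), snd (fst p), t)
  end.

Definition F (p : pt) : R := L1 (fst (fst p)) (snd (fst p)) (snd p).

Definition partial (i : nat) (f : pt -> R) (p : pt) : R :=
  Derive (fun t => f (upd p i t)) (coord p i).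

Definition critical (f : pt -> R) (p : pt) : Prop :=
  forall i : nat, (i < 3)%nat -> partial i f p = 0.

Definition hessian (f : pt -> R) (p : pt) (i j : nat) : R :=
  partial i (partial j f) p.

Definition hess_eigenvalue (f : pt -> R) (p : pt) (lam : R) : Prop :=
  exists w : nat -> R,
    (exists k : nat, (k < 3)%nat /\ w k <> 0) /\
    forall i : nat, (i < 3)%nat ->
      hessian f p i 0 * w 0%nat + hessian f p i 1 * w 1%nat
      + hessian f p i 2 * w 2%nat = lam * w i.

Definition saddle (f : pt -> R) (p : pt) : Prop :=
  critical f p /\
  (exists lam, 0 < lam /\ hess_eigenvalue f p lam) /\
  (exists lam, lam < 0 /\ hess_eigenvalue f p lam).

Definition dom (p : pt) : Prop :=
  - PI < fst (fst p) <= PI /\ 0 < snd (fst p) < PI /\ 0 < snd p < PI.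

Definition P1a : pt := (PI/2, PI/2, PI/2).
Definition P1b : pt := (- (PI/2), PI/2, PI/2).
Definition P2a : pt :=
  (PI, acos ((-1 + sqrt 5) / 2), PI - 1/2 * atan (2 * sqrt (2 + sqrt 5))).
Definition P2b : pt :=
  (0, acos ((-1 + sqrt 5) / 2), 1/2 * atan (2 * sqrt (2 + sqrt 5))).
Definition P3a : pt :=
  (PI, acos ((1 + sqrt 6) / 5), 1/2 * acos (1 / (1 - sqrt 6))).
Definition P3b : pt :=
  (0, acos ((1 + sqrt 6) / 5), PI - 1/2 * acos (1 / (1 - sqrt 6))).
Definition P4a : pt :=
  (PI, acos ((1 - sqrt 6) / 5), 1/2 * acos (1 / (1 + sqrt 6))).
Definition P4b : pt :=
  (0, acos ((1 - sqrt 6) / 5), PI - 1/2 * acos (1 / (1 + sqrt 6))).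

(* On the domain sin β₁ > 0 and cos β₁ < 1, so ∂_Ω L₁ = 0 forces sin Ω = 0 or sin 2β₂ = 0.
   The second case only leaves β₁ = β₂ = π/2 with cos Ω = 0 (item 1).  In the first,
   cos Ω = ±1 and ∂_{β₁} L₁ = ∂_{β₂} L₁ = 0 is a linear system in (cos 2β₂, sin 2β₂);
   solving it by Cramer's rule and imposing cos² 2β₂ + sin² 2β₂ = 1 leaves
   (x² + x - 1)(5x² - 2x - 1) = 0 for x = cos β₁, whose roots in (-1, 1) give items 2-4,
   the sign of sin 2β₂ then fixing β₂.  Values and the (β₁, β₂) block of the Hessian are
   rational in x and reduce modulo these quadratics; a negative block determinant yields
   eigenvalues of both signs.  The maximum follows from Cauchy-Schwarz in
   (cos 2β₂, sin 2β₂) and a polynomial inequality in x. *)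

From Stdlib Require Import Reals Lra Lia Nsatz.
From Coquelicot Require Import Coquelicot.
Open Scope R_scope.

(** * Saddles from a decoupled 2x2 block of the Hessian *)

(* Both (b, l - a) and (l - d, b) are eigenvectors; they vanish together only when
   b = 0 and l = a = d, which a d < b² excludes. *)
Lemma sym2_eigenvector a b d l :
  a * d - b * b < 0 -> (l - a) * (l - d) = b * b ->
  exists u v, (u <> 0 \/ v <> 0) /\ a * u + b * v = l * u /\ b * u + d * v = l * v.
Proof.
  intros Hdet Hl.
  destruct (Req_dec b 0) as [Hb | Hb]; [destruct (Req_dec l a) as [Ha | Ha] |].
  - exists (l - d), b. subst. split; [left; nra | split; ring].
  - exists b, (l - a). split; [right; lra | split; [ring | nra]].
  - exists b, (l - a). split; [left; exact Hb | split; [ring | nra]].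
Qed.

Lemma sym2_indefinite a b d :
  a * d - b * b < 0 ->
  exists lp ln, ln < 0 < lp /\ (lp - a) * (lp - d) = b * b /\ (ln - a) * (ln - d) = b * b.
Proof.
  intro Hdet.
  set (D := sqrt ((a - d) ^ 2 + 4 * b ^ 2)).
  assert (HD : D * D = (a - d) ^ 2 + 4 * b ^ 2) by (apply sqrt_sqrt; nra).
  assert (0 <= D) by apply sqrt_pos.
  exists ((a + d + D) / 2), ((a + d - D) / 2). repeat split; nra.
Qed.

Lemma hess_eigenvalue_block f p i j l u v :
  (i < 3)%nat -> (j < 3)%nat -> i <> j ->
  (forall k, (k < 3)%nat -> k <> i -> k <> j -> hessian f p k i = 0 /\ hessian f p k j = 0) ->
  u <> 0 \/ v <> 0 ->
  hessian f p i i * u + hessian f p i j * v = l * u ->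
  hessian f p j i * u + hessian f p j j * v = l * v ->
  hess_eigenvalue f p l.
Proof.
  intros Hi Hj Hij Hk Huv Eu Ev.
  set (w k := if Nat.eqb k i then u else if Nat.eqb k j then v else 0).
  assert (Hwi : w i = u) by (unfold w; now rewrite Nat.eqb_refl).
  assert (Hwj : w j = v)
    by (unfold w; rewrite (proj2 (Nat.eqb_neq j i)), Nat.eqb_refl; auto).
  assert (Hsum : forall k, hessian f p k 0 * w 0%nat + hessian f p k 1 * w 1%nat
                           + hessian f p k 2 * w 2%nat
                         = hessian f p k i * u + hessian f p k j * v).
  { intro k. unfold w.
    destruct i as [|[|[|i]]], j as [|[|[|j]]]; try lia; simpl; ring. }
  exists w. split.
  - destruct Huv; [exists i | exists j]; split; congruence.
  - intros k Hk'. rewrite Hsum.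
    destruct (Nat.eq_dec k i) as [-> | Hki]; [rewrite Hwi; exact Eu |].
    destruct (Nat.eq_dec k j) as [-> | Hkj]; [rewrite Hwj; exact Ev |].
    assert (Hw0 : w k = 0).
    { unfold w. now rewrite (proj2 (Nat.eqb_neq k i) Hki), (proj2 (Nat.eqb_neq k j) Hkj). }
    destruct (Hk k Hk' Hki Hkj) as [-> ->]. rewrite Hw0. ring.
Qed.

Lemma saddle_of_block f p i j :
  critical f p -> (i < 3)%nat -> (j < 3)%nat -> i <> j ->
  (forall k, (k < 3)%nat -> k <> i -> k <> j -> hessian f p k i = 0 /\ hessian f p k j = 0) ->
  hessian f p j i = hessian f p i j ->
  hessian f p i i * hessian f p j j - hessian f p i j * hessian f p i j < 0 ->
  saddle f p.
Proof.
  intros Hc Hi Hj Hij Hk Hsym Hdet.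
  destruct (sym2_indefinite _ _ _ Hdet) as (lp & ln & [Hn Hp] & Elp & Eln).
  split; [exact Hc | split].
  - exists lp. split; [exact Hp |].
    destruct (sym2_eigenvector _ _ _ _ Hdet Elp) as (u & v & Huv & Eu & Ev).
    apply (hess_eigenvalue_block f p i j lp u v); auto. rewrite Hsym. exact Ev.
  - exists ln. split; [exact Hn |].
    destruct (sym2_eigenvector _ _ _ _ Hdet Eln) as (u & v & Huv & Eu & Ev).
    apply (hess_eigenvalue_block f p i j ln u v); auto. rewrite Hsym. exact Ev.
Qed.

Lemma sin_half_sqr a : sin (a / 2) ^ 2 = (1 - cos a) / 2.
Proof. replace a with (2 * (a / 2)) at 2 by field. rewrite cos_2a_sin. field. Qed.

Lemma sin_sqr a : sin a ^ 2 = 1 - cos a ^ 2.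
Proof. rewrite <- (sin2_cos2 a). unfold Rsqr. ring. Qed.

Lemma sin_cos_sqr t : sin t * sin t + cos t * cos t = 1.
Proof. pose proof (sin2_cos2 t) as H. unfold Rsqr in H. lra. Qed.

Lemma cos_sqr_of_sin_0 t : sin t = 0 -> cos t * cos t = 1.
Proof. intro H. pose proof (sin_cos_sqr t) as E. rewrite H in E. lra. Qed.

Lemma sin_eq_0_small y : -PI < y < PI -> sin y = 0 -> y = 0.
Proof.
  intros Hy Hs. destruct (Rtotal_order y 0) as [H | [H | H]]; auto.
  - pose proof (sin_lt_0_var y (proj1 Hy) H). lra.
  - pose proof (sin_gt_0 y H (proj2 Hy)). lra.
Qed.

Lemma sin_eq_0_turn O : -PI < O <= PI -> sin O = 0 -> O = 0 \/ O = PI.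
Proof.
  intros HO Hs. destruct (Req_dec O PI) as [E | E]; [right; exact E |].
  left. apply sin_eq_0_small; [lra | exact Hs].
Qed.

Lemma cos_eq_0_turn O : -PI < O <= PI -> cos O = 0 -> O = PI / 2 \/ O = - (PI / 2).
Proof.
  intros HO Hc.
  destruct (Rtotal_order O (PI / 2)) as [H1 | [H1 | H1]]; [| left; exact H1 |].
  - destruct (Rtotal_order O (- (PI / 2))) as [H2 | [H2 | H2]]; [| right; exact H2 |].
    + pose proof (cos_lt_0 (- O)) as H. rewrite cos_neg in H. lra.
    + pose proof (cos_gt_0 O H2 H1). lra.
  - pose proof (cos_lt_0 O H1). lra.
Qed.

Lemma double_angle_inj b b' : 0 < b < PI -> 0 < b' < PI ->
  cos (2 * b) = cos (2 * b') -> sin (2 * b) = sin (2 * b') -> b = b'.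
Proof.
  intros Hb Hb' Hc Hs.
  assert (E : cos (2 * (b - b')) = 1).
  { replace (2 * (b - b')) with (2 * b - 2 * b') by ring.
    rewrite cos_minus, <- Hc, <- Hs. rewrite <- (sin_cos_sqr (2 * b)). ring. }
  rewrite cos_2a_sin in E.
  assert (sin (b - b') = 0) by nra.
  enough (b - b' = 0) by lra.
  apply sin_eq_0_small; [lra | assumption].
Qed.

Definition L1_reduced (O a b : R) : R :=
  (3 - cos a ^ 2 + cos (2 * b) * (1 - 3 * cos a ^ 2)
   - 2 * cos O * sin a * (1 - cos a) * sin (2 * b)) / 8.

Lemma L1_eq_reduced O a b : L1 O a b = L1_reduced O a b.
Proof.
  unfold L1, L1_reduced.
  rewrite sin_half_sqr, (sin_sqr a), (sin_sqr b), cos_2a_cos, (cos_2a_cos b). field.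
Qed.

(* Indices >= 2 address β₂, as in [coord] and [upd], so the formulas below hold for
   every index. *)
Definition grad_L1 (i : nat) (O a b : R) : R :=
  match i with
  | 0 => sin O * sin a * (1 - cos a) * sin (2 * b) / 4
  | 1 => (2 * cos a * sin a + 6 * cos a * sin a * cos (2 * b)
          - 2 * cos O * sin (2 * b) * (cos a * (1 - cos a) + sin a * sin a)) / 8
  | _ => (- 2 * sin (2 * b) * (1 - 3 * cos a ^ 2)
          - 4 * cos O * sin a * (1 - cos a) * cos (2 * b)) / 8
  end.

Lemma partial_F i O a b : partial i F (O, a, b) = grad_L1 i O a b.
Proof.
  unfold partial, F.
  destruct i as [|[|i]]; simpl; erewrite Derive_ext by (intro; apply L1_eq_reduced);
    apply is_derive_unique; unfold L1_reduced; auto_derive; auto; field.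
Qed.

Definition hess_L1 (i j : nat) (O a b : R) : R :=
  match i, j with
  | 0, 0 => cos O * sin a * (1 - cos a) * sin (2 * b) / 4
  | 0, 1 | 1, 0 => sin O * sin (2 * b) * (cos a * (1 - cos a) + sin a * sin a) / 4
  | 0, _ | _, 0 => sin O * sin a * (1 - cos a) * cos (2 * b) / 2
  | 1, 1 => (2 * (cos a ^ 2 - sin a ^ 2) * (1 + 3 * cos (2 * b))
             - 2 * cos O * sin (2 * b) * sin a * (4 * cos a - 1)) / 8
  | 1, _ | _, 1 => (- 12 * cos a * sin a * sin (2 * b)
             - 4 * cos O * cos (2 * b) * (cos a * (1 - cos a) + sin a * sin a)) / 8
  | _, _ => (- 4 * cos (2 * b) * (1 - 3 * cos a ^ 2)
             + 8 * cos O * sin a * (1 - cos a) * sin (2 * b)) / 8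
  end.

Lemma hessian_F i j O a b : hessian F (O, a, b) i j = hess_L1 i j O a b.
Proof.
  unfold hessian, partial at 1.
  destruct i as [|[|i]]; simpl; erewrite Derive_ext by (intro; apply partial_F);
    destruct j as [|[|j]]; simpl;
    apply is_derive_unique; auto_derive; auto; field.
Qed.

Lemma hess_L1_sym i j O a b : hess_L1 i j O a b = hess_L1 j i O a b.
Proof. destruct i as [|[|i]], j as [|[|j]]; reflexivity. Qed.

(** * The critical equations on the branch sin Ω = 0 *)

Definition quad2 (x : R) : R := x ^ 2 + x - 1.
Definition quad34 (x : R) : R := 5 * x ^ 2 - 2 * x - 1.
Definition crit_poly (x : R) : R := quad2 x * quad34 x.

(* For cos Ω = ±1, [- 4 sin β₁ * crit_det (cos β₁)] is the determinant of
   ∂_{β₁} L1 = ∂_{β₂} L1 = 0 as a linear system in (cos 2β₂, sin 2β₂), and [cos2_num] is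
   the Cramer numerator of cos 2β₂. *)
Definition crit_det (x : R) : R := 2 + 3 * x - 6 * x ^ 2 - 5 * x ^ 3.
Definition cos2_num (x : R) : R := - x * (1 - 3 * x ^ 2).
Definition sin2_num (x : R) : R := 2 * x * (1 - x ^ 2) * (1 - x).

(* At such a critical point, 8 L1 and the 8-fold Hessian entries in (β₁, β₂), multiplied by
   [crit_det x], are these polynomials in x = cos β₁ ([hess12_num] up to the sign cos Ω). *)
Definition value_num (x : R) : R :=
  (3 - x ^ 2) * crit_det x + cos2_num x * (1 - 3 * x ^ 2) - 2 * (1 - x) * sin2_num x.
Definition hess11_num (x : R) : R :=
  2 * (2 * x ^ 2 - 1) * (crit_det x + 3 * cos2_num x) - 2 * (4 * x - 1) * sin2_num x.
Definition hess22_num (x : R) : R :=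
  - 4 * cos2_num x * (1 - 3 * x ^ 2) + 8 * (1 - x) * sin2_num x.
Definition hess12_num (x : R) : R :=
  - 12 * x * sin2_num x - 4 * cos2_num x * (1 - x) * (1 + 2 * x).
Definition hess_det_num (x : R) : R :=
  hess11_num x * hess22_num x - hess12_num x * hess12_num x.

Ltac poly_nsatz := cbn [pow] in *; nsatz.

Lemma crit_det_sqr x :
  crit_det x ^ 2
  = cos2_num x ^ 2 + 4 * x ^ 2 * (1 - x ^ 2) * (1 - x) ^ 2 + 4 * (1 + x) ^ 2 * crit_poly x.
Proof. unfold crit_det, cos2_num, crit_poly, quad2, quad34. ring. Qed.

Lemma crit_eqs_solve x s c C S :
  s * s = 1 - x * x -> c * c = 1 ->
  2 * x * s + 6 * x * s * C - 2 * c * S * (x * (1 - x) + s * s) = 0 ->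
  - 2 * S * (1 - 3 * x ^ 2) - 4 * c * s * (1 - x) * C = 0 ->
  s * (C * crit_det x - cos2_num x) = 0 /\ s * (S * crit_det x - 2 * c * x * s * (1 - x)) = 0.
Proof. intros. unfold crit_det, cos2_num. split; poly_nsatz. Qed.

Lemma crit_det_nonzero x s c S :
  0 < s -> x < 1 -> c * c = 1 -> S * crit_det x = 2 * c * x * s * (1 - x) -> crit_det x <> 0.
Proof.
  intros Hs Hx Hc HS Hq. rewrite Hq, Rmult_0_r in HS.
  assert (Hx0 : x * (s * (1 - x)) = 0).
  { transitivity (c * (2 * c * x * s * (1 - x)) / 2); [| rewrite <- HS; field].
    transitivity (c * c * x * (s * (1 - x))); [rewrite Hc |]; field. }
  assert (x = 0) by (apply Rmult_integral in Hx0; destruct Hx0; nra).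
  subst x. unfold crit_det in Hq. lra.
Qed.

Lemma crit_poly_of_circle x s c C S :
  s * s = 1 - x * x -> c * c = 1 -> C * C + S * S = 1 -> -1 < x ->
  C * crit_det x = cos2_num x -> S * crit_det x = 2 * c * x * s * (1 - x) ->
  crit_poly x = 0.
Proof.
  intros Hs Hc HCS Hx HC HS.
  assert (K : crit_det x ^ 2 = cos2_num x ^ 2 + (2 * c * x * s * (1 - x)) ^ 2).
  { rewrite <- HC, <- HS.
    transitivity (crit_det x ^ 2 * (C * C + S * S)); [rewrite HCS |]; ring. }
  replace ((2 * c * x * s * (1 - x)) ^ 2) with (4 * (c * c) * x ^ 2 * (s * s) * (1 - x) ^ 2)
    in K by ring.
  rewrite Hc, Hs, crit_det_sqr in K.
  assert (H4 : 4 * (1 + x) ^ 2 * crit_poly x = 0) by (cbn [pow] in *; lra).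
  apply Rmult_integral in H4. destruct H4 as [H4 | H4]; [nra | exact H4].
Qed.

Lemma branch_alg x s c C S :
  s * s = 1 - x * x -> c * c = 1 ->
  C * crit_det x = cos2_num x -> S * crit_det x = 2 * c * x * s * (1 - x) ->
  (2 * x * s + 6 * x * s * C - 2 * c * S * (x * (1 - x) + s * s)) * crit_det x = 0 /\
  (- 2 * S * (1 - 3 * x ^ 2) - 4 * c * s * (1 - x) * C) * crit_det x = 0 /\
  (3 - x ^ 2 + C * (1 - 3 * x ^ 2) - 2 * c * s * (1 - x) * S) * crit_det x = value_num x /\
  (2 * (x ^ 2 - s ^ 2) * (1 + 3 * C) - 2 * c * S * s * (4 * x - 1)) * crit_det x
    = hess11_num x /\
  (- 4 * C * (1 - 3 * x ^ 2) + 8 * c * s * (1 - x) * S) * crit_det x = hess22_num x /\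
  (- 12 * x * s * S - 4 * c * C * (x * (1 - x) + s * s)) * crit_det x = c * hess12_num x.
Proof.
  intros. unfold value_num, hess11_num, hess22_num, hess12_num, sin2_num in *.
  unfold crit_det, cos2_num in *. repeat split; poly_nsatz.
Qed.

Lemma quad2_evals x : quad2 x = 0 ->
  crit_det x = 1 - x /\ cos2_num x * (2 * x + 3) = crit_det x /\
  value_num x = 2 - 2 * x /\ hess_det_num x = 16 * (15 - 25 * x).
Proof.
  unfold value_num, hess_det_num, hess11_num, hess22_num, hess12_num, sin2_num,
    quad2, crit_det, cos2_num.
  intro. repeat split; poly_nsatz.
Qed.

Lemma quad34_evals x : quad34 x = 0 ->
  5 * crit_det x = 2 - 6 * x /\ cos2_num x * (2 - 5 * x) = crit_det x /\
  125 * value_num x = 312 - 696 * x /\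
  78125 * hess_det_num x = 64 * (25056 - 51048 * x).
Proof.
  unfold value_num, hess_det_num, hess11_num, hess22_num, hess12_num, sin2_num,
    quad34, crit_det, cos2_num.
  intro. repeat split; poly_nsatz.
Qed.

(* The critical points with sin Ω = 0, with cos 2β₂ and sin 2β₂ given by Cramer's rule. *)
Definition branch_point (p : pt) (x : R) : Prop :=
  let '(om, a, b) := p in
  sin om = 0 /\ cos a = x /\ crit_det x <> 0 /\ crit_poly x = 0 /\
  cos (2 * b) * crit_det x = cos2_num x /\
  sin (2 * b) * crit_det x = 2 * cos om * x * sin a * (1 - x).

Lemma branch_point_alg O a b x : branch_point (O, a, b) x ->
  (2 * x * sin a + 6 * x * sin a * cos (2 * b)
   - 2 * cos O * sin (2 * b) * (x * (1 - x) + sin a * sin a)) * crit_det x = 0 /\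
  (- 2 * sin (2 * b) * (1 - 3 * x ^ 2) - 4 * cos O * sin a * (1 - x) * cos (2 * b))
    * crit_det x = 0 /\
  (3 - x ^ 2 + cos (2 * b) * (1 - 3 * x ^ 2) - 2 * cos O * sin a * (1 - x) * sin (2 * b))
    * crit_det x = value_num x /\
  (2 * (x ^ 2 - sin a ^ 2) * (1 + 3 * cos (2 * b))
   - 2 * cos O * sin (2 * b) * sin a * (4 * x - 1)) * crit_det x = hess11_num x /\
  (- 4 * cos (2 * b) * (1 - 3 * x ^ 2) + 8 * cos O * sin a * (1 - x) * sin (2 * b))
    * crit_det x = hess22_num x /\
  (- 12 * x * sin a * sin (2 * b)
   - 4 * cos O * cos (2 * b) * (x * (1 - x) + sin a * sin a)) * crit_det x
    = cos O * hess12_num x.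
Proof.
  intros (HO & Ha & _ & _ & HC & HS).
  apply branch_alg; auto.
  - subst x. pose proof (sin_cos_sqr a). lra.
  - exact (cos_sqr_of_sin_0 O HO).
Qed.

Lemma branch_point_critical p x : branch_point p x -> critical F p.
Proof.
  destruct p as [[O a] b]. intro Hb.
  pose proof Hb as (HO & Ha & Hq & _).
  destruct (branch_point_alg O a b x Hb) as (E1 & E2 & _). subst x.
  intros i Hi. rewrite partial_F.
  destruct i as [|[|[|i]]]; [| | | lia]; simpl.
  - rewrite HO. field.
  - apply (Rmult_eq_reg_r (crit_det (cos a))); [lra | exact Hq].
  - apply (Rmult_eq_reg_r (crit_det (cos a))); [lra | exact Hq].
Qed.

Lemma branch_point_value p x : branch_point p x -> 8 * F p * crit_det x = value_num x.
Proof.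
  destruct p as [[O a] b]. intro Hb.
  pose proof Hb as (_ & Ha & _).
  destruct (branch_point_alg O a b x Hb) as (_ & _ & EV & _).
  unfold F. simpl. rewrite L1_eq_reduced. unfold L1_reduced. rewrite Ha, <- EV. field.
Qed.

Lemma branch_point_hessian p x : branch_point p x ->
  hessian F p 0 1 = 0 /\ hessian F p 0 2 = 0 /\
  64 * crit_det x ^ 2 * (hessian F p 1 1 * hessian F p 2 2 - hessian F p 1 2 * hessian F p 1 2)
  = hess_det_num x.
Proof.
  destruct p as [[O a] b]. intro Hb.
  pose proof Hb as (HO & Ha & _).
  destruct (branch_point_alg O a b x Hb) as (_ & _ & _ & E11 & E22 & E12).
  rewrite !hessian_F. simpl. rewrite HO. subst x.
  split; [field | split; [field |]].
  pose proof (cos_sqr_of_sin_0 O HO) as Hc.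
  unfold hess_det_num. rewrite <- E11, <- E22.
  replace (hess12_num (cos a) * hess12_num (cos a))
    with ((cos O * hess12_num (cos a)) * (cos O * hess12_num (cos a)))
    by (transitivity (cos O * cos O * (hess12_num (cos a) * hess12_num (cos a))); [ring |];
        rewrite Hc; ring).
  rewrite <- E12. field.
Qed.

Lemma branch_point_crit_det p x : branch_point p x -> crit_det x <> 0.
Proof. destruct p as [[O a] b]. intro Hb. apply Hb. Qed.

Lemma branch_point_saddle p x : branch_point p x -> hess_det_num x < 0 -> saddle F p.
Proof.
  intros Hb Hneg.
  pose proof (branch_point_crit_det p x Hb) as Hq.
  destruct (branch_point_hessian p x Hb) as (H01 & H02 & Hdet).
  apply (saddle_of_block F p 1 2); [exact (branch_point_critical p x Hb) | lia | lia | lia | | |].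
  - intros k Hk Hk1 Hk2. assert (k = 0%nat) as -> by lia. auto.
  - destruct p as [[O a] b]. rewrite !hessian_F. apply hess_L1_sym.
  - assert (0 < 64 * crit_det x ^ 2) by (apply Rmult_lt_0_compat; [lra | apply pow2_gt_0, Hq]).
    nra.
Qed.

Lemma branch_point_value_quad2 p x : branch_point p x -> quad2 x = 0 -> F p = 1 / 4.
Proof.
  intros Hb Hx. pose proof (branch_point_value p x Hb) as HV.
  pose proof (branch_point_crit_det p x Hb) as Hq0.
  destruct (quad2_evals x Hx) as (Hq & _ & Hv & _).
  rewrite Hv, Hq in HV. rewrite Hq in Hq0.
  apply (Rmult_eq_reg_r (8 * (1 - x))); lra.
Qed.

Lemma branch_point_value_quad34 p x : branch_point p x -> quad34 x = 0 -> F p = 3 * (2 - x) / 10.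
Proof.
  intros Hb Hx. pose proof (branch_point_value p x Hb) as HV.
  pose proof (branch_point_crit_det p x Hb) as Hq0.
  destruct (quad34_evals x Hx) as (Hq & _ & Hv & _).
  assert (H2 : 312 - 696 * x = 60 * (2 - x) * (2 - 6 * x))
    by (unfold quad34 in Hx; cbn [pow] in Hx; nra).
  apply (Rmult_eq_reg_r (8 * (2 - 6 * x))); [| lra].
  nra.
Qed.

Lemma hess_det_num_neg_quad2 x : quad2 x = 0 -> 0 < x -> hess_det_num x < 0.
Proof.
  intros Hx Hpos. destruct (quad2_evals x Hx) as (_ & _ & _ & ->).
  unfold quad2 in Hx. nra.
Qed.

Lemma hess_det_num_neg_quad34 x : quad34 x = 0 -> 0 < x -> hess_det_num x < 0.
Proof.
  intros Hx Hpos. destruct (quad34_evals x Hx) as (_ & _ & _ & H).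
  unfold quad34 in Hx. nra.
Qed.

Definition x2 : R := (-1 + sqrt 5) / 2.
Definition x3 : R := (1 + sqrt 6) / 5.
Definition x4 : R := (1 - sqrt 6) / 5.

Lemma sqrt5_bounds : sqrt 5 * sqrt 5 = 5 /\ 2.236 < sqrt 5 < 2.237.
Proof.
  assert (H : sqrt 5 * sqrt 5 = 5) by (apply sqrt_sqrt; lra).
  pose proof (sqrt_pos 5). split; [exact H | split; nra].
Qed.

Lemma sqrt6_bounds : sqrt 6 * sqrt 6 = 6 /\ 2.449 < sqrt 6 < 2.45.
Proof.
  assert (H : sqrt 6 * sqrt 6 = 6) by (apply sqrt_sqrt; lra).
  pose proof (sqrt_pos 6). split; [exact H | split; nra].
Qed.

Lemma quad2_x2 : quad2 x2 = 0.
Proof. destruct sqrt5_bounds as [H _]. unfold quad2, x2. cbn [pow]. nra. Qed.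

Lemma quad34_x3 : quad34 x3 = 0.
Proof. destruct sqrt6_bounds as [H _]. unfold quad34, x3. cbn [pow]. nra. Qed.

Lemma quad34_x4 : quad34 x4 = 0.
Proof. destruct sqrt6_bounds as [H _]. unfold quad34, x4. cbn [pow]. nra. Qed.

Lemma crit_poly_roots x : -1 < x -> crit_poly x = 0 -> x = x2 \/ x = x3 \/ x = x4.
Proof.
  intros Hx H. destruct sqrt5_bounds as [H5 B5]. destruct sqrt6_bounds as [H6 B6].
  unfold crit_poly, quad2, quad34 in H. apply Rmult_integral in H. destruct H as [H | H].
  - left. unfold x2.
    assert (E : (2 * x + 1 - sqrt 5) * (2 * x + 1 + sqrt 5) = 0) by (cbn [pow] in H; nra).
    apply Rmult_integral in E. lra.
  - right. unfold x3, x4.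
    assert (E : (5 * x - 1 - sqrt 6) * (5 * x - 1 + sqrt 6) = 0) by (cbn [pow] in H; nra).
    apply Rmult_integral in E. lra.
Qed.

Lemma eq_of_sqr_eq_same_sign y t w : y * y = t * t -> 0 < y * w -> 0 <= t * w -> y = t.
Proof.
  intros Hsq Hy Ht.
  assert (E : (y - t) * (y + t) = 0) by lra.
  apply Rmult_integral in E. destruct E as [E | E]; [lra |].
  assert (y = - t) by lra. subst y. lra.
Qed.

Lemma branch_point_acos O x b : sin O = 0 -> -1 < x < 1 ->
  crit_det x <> 0 -> crit_poly x = 0 -> cos (2 * b) * crit_det x = cos2_num x ->
  0 < sin (2 * b) * (cos O * x * crit_det x) -> branch_point (O, acos x, b) x.
Proof.
  intros HO Hx Hq Hr HC Hsign.
  assert (Hca : cos (acos x) = x) by (apply cos_acos; lra).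
  assert (Hsa : 0 < sin (acos x)).
  { rewrite sin_acos by lra. apply sqrt_lt_R0. unfold Rsqr. nra. }
  pose proof (sin_cos_sqr (acos x)) as Hss. rewrite Hca in Hss.
  pose proof (cos_sqr_of_sin_0 O HO) as Hc.
  repeat split; auto.
  apply (eq_of_sqr_eq_same_sign _ _ (cos O * x)).
  - pose proof (sin_cos_sqr (2 * b)) as Hb. pose proof (crit_det_sqr x) as Hdet.
    rewrite Hr in Hdet.
    transitivity (crit_det x ^ 2 - (cos (2 * b) * crit_det x) ^ 2); [nra |].
    rewrite HC, Hdet.
    transitivity (4 * (cos O * cos O) * x ^ 2 * (sin (acos x) * sin (acos x)) * (1 - x) ^ 2);
      [rewrite Hc; replace (sin (acos x) * sin (acos x)) with (1 - x * x) by lra |]; ring.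
  - nra.
  - replace (2 * cos O * x * sin (acos x) * (1 - x) * (cos O * x))
      with (2 * (cos O * cos O) * x ^ 2 * sin (acos x) * (1 - x)) by ring.
    rewrite Hc. apply Rmult_le_pos; [| lra].
    apply Rmult_le_pos; [| lra]. nra.
Qed.

(* β₂ = θ/2 and β₂ = π - θ/2 share cos 2β₂ and have opposite sin 2β₂; the sign
   hypothesis selects the one compatible with the Cramer value of sin 2β₂. *)
Lemma listed_point_half O x th k : sin O = 0 -> -PI < O <= PI -> -1 < x < 1 ->
  crit_poly x = 0 -> 0 < th < PI -> cos th * k = 1 -> cos2_num x * k = crit_det x ->
  0 < cos O * x * crit_det x ->
  dom (O, acos x, 1 / 2 * th) /\ branch_point (O, acos x, 1 / 2 * th) x.
Proof.
  intros HO HOr Hx Hr Hth Hk HC Hsign.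
  assert (Hq : crit_det x <> 0) by (intro E; rewrite E in Hsign; lra).
  assert (Hdbl : 2 * (1 / 2 * th) = th) by field.
  split.
  - unfold dom; simpl. pose proof (acos_bound_lt x Hx). lra.
  - apply branch_point_acos; rewrite ?Hdbl; auto.
    + rewrite <- HC. transitivity (cos2_num x * (cos th * k)); [ring | rewrite Hk; ring].
    + apply Rmult_lt_0_compat; [apply sin_gt_0 |]; lra.
Qed.

Lemma listed_point_reflected O x th k : sin O = 0 -> -PI < O <= PI -> -1 < x < 1 ->
  crit_poly x = 0 -> 0 < th < PI -> cos th * k = 1 -> cos2_num x * k = crit_det x ->
  cos O * x * crit_det x < 0 ->
  dom (O, acos x, PI - 1 / 2 * th) /\ branch_point (O, acos x, PI - 1 / 2 * th) x.
Proof.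
  intros HO HOr Hx Hr Hth Hk HC Hsign.
  assert (Hq : crit_det x <> 0) by (intro E; rewrite E in Hsign; lra).
  assert (Hdbl : 2 * (PI - 1 / 2 * th) = 2 * PI - th) by field.
  split.
  - unfold dom; simpl. pose proof (acos_bound_lt x Hx). lra.
  - apply branch_point_acos; rewrite ?Hdbl; auto.
    + rewrite cos_minus, cos_2PI, sin_2PI, <- HC.
      transitivity (cos2_num x * (cos th * k)); [ring | rewrite Hk; ring].
    + rewrite sin_minus, cos_2PI, sin_2PI.
      pose proof (sin_gt_0 th (proj1 Hth) (proj2 Hth)). nra.
Qed.

Lemma x2_facts : -1 < x2 < 1 /\ crit_poly x2 = 0 /\ 0 < x2 * crit_det x2 /\
  cos2_num x2 * (2 + sqrt 5) = crit_det x2.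
Proof.
  destruct (quad2_evals x2 quad2_x2) as (Hq & HC & _). destruct sqrt5_bounds as [_ B5].
  assert (Hx : 0 < x2 < 1) by (unfold x2; lra).
  repeat split; try lra.
  - unfold crit_poly. rewrite quad2_x2. ring.
  - rewrite Hq. nra.
  - rewrite <- HC. unfold x2. field.
Qed.

Lemma x3_facts : -1 < x3 < 1 /\ crit_poly x3 = 0 /\ x3 * crit_det x3 < 0 /\
  cos2_num x3 * (1 - sqrt 6) = crit_det x3.
Proof.
  destruct (quad34_evals x3 quad34_x3) as (Hq & HC & _). destruct sqrt6_bounds as [_ B6].
  assert (Hx : 0.6 < x3 < 1) by (unfold x3; lra).
  repeat split; try lra.
  - unfold crit_poly. rewrite quad34_x3. ring.
  - nra.
  - rewrite <- HC. unfold x3. field.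
Qed.

Lemma x4_facts : -1 < x4 < 1 /\ crit_poly x4 = 0 /\ x4 * crit_det x4 < 0 /\
  cos2_num x4 * (1 + sqrt 6) = crit_det x4.
Proof.
  destruct (quad34_evals x4 quad34_x4) as (Hq & HC & _). destruct sqrt6_bounds as [_ B6].
  assert (Hx : -0.3 < x4 < 0) by (unfold x4; lra).
  repeat split; try lra.
  - unfold crit_poly. rewrite quad34_x4. ring.
  - nra.
  - rewrite <- HC. unfold x4. field.
Qed.

Lemma atan_angle_facts :
  0 < atan (2 * sqrt (2 + sqrt 5)) < PI /\ cos (atan (2 * sqrt (2 + sqrt 5))) * (2 + sqrt 5) = 1.
Proof.
  destruct sqrt5_bounds as [H5 B5].
  set (k := 2 * sqrt (2 + sqrt 5)).
  assert (Hk : 0 < k) by (unfold k; apply Rmult_lt_0_compat; [lra | apply sqrt_lt_R0; lra]).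
  assert (Hk2 : 1 + k² = (2 + sqrt 5)²).
  { unfold k, Rsqr. transitivity (1 + 4 * (sqrt (2 + sqrt 5) * sqrt (2 + sqrt 5))); [ring |].
    rewrite sqrt_sqrt by lra. nra. }
  split.
  - pose proof (atan_bound k). pose proof (atan_increasing 0 k Hk). rewrite atan_0 in *. lra.
  - rewrite cos_atan, Hk2, sqrt_Rsqr by lra. field. lra.
Qed.

Lemma acos_angle_facts w : -1 < w < 1 -> 0 < acos w < PI /\ cos (acos w) = w.
Proof. intro Hw. split; [apply acos_bound_lt, Hw | apply cos_acos; lra]. Qed.

Lemma P2a_branch : dom P2a /\ branch_point P2a x2.
Proof.
  destruct x2_facts as (Hx & Hr & Hsign & HC). destruct atan_angle_facts as (Hth & Hk).
  apply (listed_point_reflected PI x2 _ (2 + sqrt 5) sin_PI); auto.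
  - pose proof PI_RGT_0. lra.
  - rewrite cos_PI. lra.
Qed.

Lemma P2b_branch : dom P2b /\ branch_point P2b x2.
Proof.
  destruct x2_facts as (Hx & Hr & Hsign & HC). destruct atan_angle_facts as (Hth & Hk).
  apply (listed_point_half 0 x2 _ (2 + sqrt 5) sin_0); auto.
  - pose proof PI_RGT_0. lra.
  - rewrite cos_0. lra.
Qed.

Lemma one_div_bound d : 1 < Rabs d -> -1 < 1 / d < 1.
Proof.
  intro Hd. assert (Hd0 : d <> 0) by (intro E; subst; rewrite Rabs_R0 in Hd; lra).
  assert (E : d * (1 / d) = 1) by (field; exact Hd0).
  destruct (Rcase_abs d) as [Hn | Hp]; [rewrite Rabs_left in Hd | rewrite Rabs_right in Hd];
    auto; split; nra.
Qed.

Lemma P3a_branch : dom P3a /\ branch_point P3a x3.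
Proof.
  destruct x3_facts as (Hx & Hr & Hsign & HC). destruct sqrt6_bounds as [_ B6].
  assert (Hw : -1 < 1 / (1 - sqrt 6) < 1) by (apply one_div_bound; rewrite Rabs_left; lra).
  destruct (acos_angle_facts _ Hw) as (Hth & Hc).
  apply (listed_point_half PI x3 _ (1 - sqrt 6) sin_PI); auto.
  - pose proof PI_RGT_0. lra.
  - rewrite Hc. field. lra.
  - rewrite cos_PI. lra.
Qed.

Lemma P3b_branch : dom P3b /\ branch_point P3b x3.
Proof.
  destruct x3_facts as (Hx & Hr & Hsign & HC). destruct sqrt6_bounds as [_ B6].
  assert (Hw : -1 < 1 / (1 - sqrt 6) < 1) by (apply one_div_bound; rewrite Rabs_left; lra).
  destruct (acos_angle_facts _ Hw) as (Hth & Hc).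
  apply (listed_point_reflected 0 x3 _ (1 - sqrt 6) sin_0); auto.
  - pose proof PI_RGT_0. lra.
  - rewrite Hc. field. lra.
  - rewrite cos_0. lra.
Qed.

Lemma P4a_branch : dom P4a /\ branch_point P4a x4.
Proof.
  destruct x4_facts as (Hx & Hr & Hsign & HC). destruct sqrt6_bounds as [_ B6].
  assert (Hw : -1 < 1 / (1 + sqrt 6) < 1) by (apply one_div_bound; rewrite Rabs_right; lra).
  destruct (acos_angle_facts _ Hw) as (Hth & Hc).
  apply (listed_point_half PI x4 _ (1 + sqrt 6) sin_PI); auto.
  - pose proof PI_RGT_0. lra.
  - rewrite Hc. field. lra.
  - rewrite cos_PI. lra.
Qed.

Lemma P4b_branch : dom P4b /\ branch_point P4b x4.
Proof.
  destruct x4_facts as (Hx & Hr & Hsign & HC). destruct sqrt6_bounds as [_ B6].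
  assert (Hw : -1 < 1 / (1 + sqrt 6) < 1) by (apply one_div_bound; rewrite Rabs_right; lra).
  destruct (acos_angle_facts _ Hw) as (Hth & Hc).
  apply (listed_point_reflected 0 x4 _ (1 + sqrt 6) sin_0); auto.
  - pose proof PI_RGT_0. lra.
  - rewrite Hc. field. lra.
  - rewrite cos_0. lra.
Qed.

(** * Classification of the critical points *)

Lemma branch_point_unique O a b a' b' x : dom (O, a, b) -> dom (O, a', b') ->
  branch_point (O, a, b) x -> branch_point (O, a', b') x -> a = a' /\ b = b'.
Proof.
  intros (_ & Ha & Hb) (_ & Ha' & Hb') (_ & Hx & Hq & _ & HC & HS) (_ & Hx' & _ & _ & HC' & HS').
  simpl in *.
  assert (Ea : a = a').
  { rewrite <- (acos_cos a), <- (acos_cos a'), Hx, Hx'; auto; lra. }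
  subst a'. split; [reflexivity |].
  apply double_angle_inj; auto; apply (Rmult_eq_reg_r (crit_det x)); auto; congruence.
Qed.

Lemma critical_sin_0_branch O a b : 0 < a < PI -> sin O = 0 ->
  grad_L1 1 O a b = 0 -> grad_L1 2 O a b = 0 -> branch_point (O, a, b) (cos a).
Proof.
  intros Ha HO E1 E2. cbn [grad_L1] in E1, E2.
  assert (Hs : 0 < sin a) by (apply sin_gt_0; lra).
  assert (Hss : sin a * sin a = 1 - cos a * cos a) by (pose proof (sin_cos_sqr a); lra).
  assert (Hx : -1 < cos a < 1) by (split; nra).
  pose proof (cos_sqr_of_sin_0 O HO) as Hc.
  pose proof (sin_cos_sqr (2 * b)) as HCS.
  destruct (crit_eqs_solve (cos a) (sin a) (cos O) (cos (2 * b)) (sin (2 * b)) Hss Hc)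
    as [HC HS]; [lra | lra |].
  apply Rmult_integral in HC, HS. destruct HC as [HC | HC]; [lra |].
  destruct HS as [HS | HS]; [lra |].
  assert (HC' : cos (2 * b) * crit_det (cos a) = cos2_num (cos a)) by lra.
  assert (HS' : sin (2 * b) * crit_det (cos a) = 2 * cos O * cos a * sin a * (1 - cos a)) by lra.
  repeat split; auto.
  - exact (crit_det_nonzero _ _ _ (sin (2 * b)) Hs (proj2 Hx) Hc HS').
  - apply (crit_poly_of_circle _ _ _ (cos (2 * b)) (sin (2 * b)) Hss Hc); auto; lra.
Qed.

Lemma critical_sin_2b_0 O a b : 0 < a < PI -> 0 < b < PI -> sin (2 * b) = 0 ->
  grad_L1 1 O a b = 0 -> grad_L1 2 O a b = 0 -> cos O = 0 /\ a = PI / 2 /\ b = PI / 2.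
Proof.
  intros Ha Hb Hs2 E1 E2. cbn [grad_L1] in E1, E2.
  assert (Hs : 0 < sin a) by (apply sin_gt_0; lra).
  assert (Hb2 : b = PI / 2).
  { assert (E : 2 * b - PI = 0).
    { apply sin_eq_0_small; [lra |]. rewrite sin_minus, sin_PI, cos_PI, Hs2. ring. }
    lra. }
  subst b. replace (2 * (PI / 2)) with PI in * by field.
  rewrite sin_PI, cos_PI in *.
  assert (Hca : 1 - cos a > 0) by (pose proof (COS_bound a); pose proof (sin_cos_sqr a); nra).
  assert (HcO : cos O = 0) by nra.
  assert (Hx : cos a = 0) by nra.
  split; [exact HcO | split; [| reflexivity]].
  rewrite <- (acos_cos a), Hx by lra. exact acos_0.
Qed.

Lemma critical_cases O a b : dom (O, a, b) -> critical F (O, a, b) ->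
  (cos O = 0 /\ a = PI / 2 /\ b = PI / 2) \/ branch_point (O, a, b) (cos a).
Proof.
  intros (_ & Ha & Hb) Hcrit. simpl in Ha, Hb.
  assert (E0 : grad_L1 0 O a b = 0) by (rewrite <- partial_F; apply Hcrit; lia).
  assert (E1 : grad_L1 1 O a b = 0) by (rewrite <- partial_F; apply Hcrit; lia).
  assert (E2 : grad_L1 2 O a b = 0) by (rewrite <- partial_F; apply Hcrit; lia).
  assert (Hpos : 0 < sin a * (1 - cos a)).
  { pose proof (sin_gt_0 a (proj1 Ha) (proj2 Ha)). pose proof (sin_cos_sqr a).
    apply Rmult_lt_0_compat; nra. }
  cbn [grad_L1] in E0.
  assert (E0' : sin O * sin (2 * b) * (sin a * (1 - cos a)) = 0) by lra.
  apply Rmult_integral in E0'. destruct E0' as [E0' | E0']; [| lra].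
  apply Rmult_integral in E0'. destruct E0' as [HO | Hs2].
  - right. exact (critical_sin_0_branch O a b Ha HO E1 E2).
  - left. exact (critical_sin_2b_0 O a b Ha Hb Hs2 E1 E2).
Qed.

Definition ortho_point (O : R) : pt := (O, PI / 2, PI / 2).

Lemma ortho_point_critical O : cos O = 0 -> critical F (ortho_point O).
Proof.
  intros Hc i Hi. unfold ortho_point. rewrite partial_F.
  assert (Hdbl : 2 * (PI / 2) = PI) by field.
  destruct i as [|[|[|i]]]; [| | | lia]; cbn [grad_L1];
    rewrite Hdbl, ?sin_PI, ?cos_PI, ?cos_PI2, ?Hc; field.
Qed.

Lemma ortho_point_value O : F (ortho_point O) = 1 / 4.
Proof.
  unfold F, ortho_point. simpl. rewrite L1_eq_reduced. unfold L1_reduced.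
  replace (2 * (PI / 2)) with PI by field.
  rewrite sin_PI, cos_PI, cos_PI2. field.
Qed.

Lemma ortho_point_saddle O : cos O = 0 -> saddle F (ortho_point O).
Proof.
  intro Hc. pose proof (ortho_point_critical O Hc) as Hcrit. unfold ortho_point in *.
  assert (Hs : sin O * sin O = 1) by (pose proof (sin_cos_sqr O); nra).
  apply (saddle_of_block F _ 0 2); [exact Hcrit | lia | lia | lia | | |].
  - intros k Hk Hk0 Hk2. assert (k = 1%nat) as -> by lia.
    rewrite !hessian_F. cbn [hess_L1].
    replace (2 * (PI / 2)) with PI by field.
    rewrite sin_PI, cos_PI2, Hc. split; field.
  - rewrite !hessian_F. apply hess_L1_sym.
  - rewrite !hessian_F. cbn [hess_L1].
    replace (2 * (PI / 2)) with PI by field.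
    rewrite sin_PI, cos_PI, sin_PI2, cos_PI2, Hc.
    nra.
Qed.

Lemma branch_point_listed p x : dom p -> branch_point p x ->
  p = P2a \/ p = P2b \/ p = P3a \/ p = P3b \/ p = P4a \/ p = P4b.
Proof.
  destruct p as [[O a] b]. intros Hd Hb.
  pose proof Hb as (HO & Hx & _ & Hr & _).
  pose proof Hd as (HOr & Ha & _). simpl in HOr, Ha.
  assert (Hx1 : -1 < x).
  { subst x. pose proof (sin_gt_0 a (proj1 Ha) (proj2 Ha)). pose proof (sin_cos_sqr a). nra. }
  assert (Hsame : forall q, dom q -> branch_point q x -> fst (fst q) = O -> (O, a, b) = q).
  { intros [[O' a'] b'] Hd' Hb' E. simpl in E. subst O'.
    destruct (branch_point_unique O a b a' b' x Hd Hd' Hb Hb') as [-> ->]. reflexivity. }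
  destruct (sin_eq_0_turn O HOr HO) as [-> | ->];
  destruct (crit_poly_roots x Hx1 Hr) as [-> | [-> | ->]].
  - right; left. apply Hsame; [apply P2b_branch | apply P2b_branch | reflexivity].
  - do 3 right; left. apply Hsame; [apply P3b_branch | apply P3b_branch | reflexivity].
  - do 5 right. apply Hsame; [apply P4b_branch | apply P4b_branch | reflexivity].
  - left. apply Hsame; [apply P2a_branch | apply P2a_branch | reflexivity].
  - do 2 right; left. apply Hsame; [apply P3a_branch | apply P3a_branch | reflexivity].
  - do 4 right; left. apply Hsame; [apply P4a_branch | apply P4a_branch | reflexivity].
Qed.

(** * The global maximum *)

Lemma unit_dot_le C S A B M : C * C + S * S = 1 -> 0 <= M -> A ^ 2 + B ^ 2 <= M ^ 2 ->
  C * A + S * B <= M.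
Proof.
  intros HCS HM Hle.
  assert (CS : (C * A + S * B) ^ 2 <= A ^ 2 + B ^ 2).
  { assert (E : (A ^ 2 + B ^ 2) * (C * C + S * S) - (C * A + S * B) ^ 2 = (A * S - B * C) ^ 2)
      by ring.
    rewrite HCS in E. pose proof (pow2_ge_0 (A * S - B * C)). lra. }
  destruct (Rle_or_lt (C * A + S * B) M) as [H | H]; [exact H |].
  cbn [pow] in *. nra.
Qed.

(* With M := (33 + 12 r) / 25 + x², 3 - x² + M = 8 * 3/50 * (9 + r); the difference of the
   two sides has the double root x = (1 - r) / 5 = x4, where the bound is attained. *)
Lemma max_envelope x r : r * r = 6 -> 0 <= r -> -1 <= x <= 1 ->
  (1 - 3 * x ^ 2) ^ 2 + 4 * (1 - x ^ 2) * (1 - x) ^ 2 <= ((33 + 12 * r) / 25 + x ^ 2) ^ 2.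
Proof.
  intros Hr Hr0 Hx.
  assert (Hr1 : 2.4 < r) by nra.
  set (Q := - 100 * x ^ 2 + (- 240 + 40 * r) * x + 52 + 128 * r).
  assert (HQ : 0 <= Q).
  { assert (E : Q = ((1 - x) * (192 + 88 * r) + (1 + x) * (- 288 + 168 * r)) / 2
                    + 100 * (1 - x ^ 2)) by (unfold Q; field).
    assert (0 <= (1 - x) * (192 + 88 * r)) by (apply Rmult_le_pos; lra).
    assert (0 <= (1 + x) * (- 288 + 168 * r)) by (apply Rmult_le_pos; lra).
    cbn [pow] in *. nra. }
  assert (E : (33 + 12 * r + 25 * x ^ 2) ^ 2
              - 625 * (1 - 3 * x ^ 2) ^ 2 - 2500 * (1 - x ^ 2) * (1 - x) ^ 2
              = (5 * x - 1 + r) ^ 2 * Q) by (unfold Q; clear - Hr; cbn [pow] in *; nsatz).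
  pose proof (Rmult_le_pos _ _ (pow2_ge_0 (5 * x - 1 + r)) HQ).
  replace (((33 + 12 * r) / 25 + x ^ 2) ^ 2) with ((33 + 12 * r + 25 * x ^ 2) ^ 2 / 625)
    by field.
  lra.
Qed.

Lemma F_le_max p : F p <= 3 / 50 * (9 + sqrt 6).
Proof.
  destruct p as [[O a] b]. unfold F. simpl. rewrite L1_eq_reduced. unfold L1_reduced.
  destruct sqrt6_bounds as [H6 B6].
  pose proof (sin_cos_sqr a) as Ha. pose proof (sin_cos_sqr O) as HO.
  assert (Hx : -1 <= cos a <= 1) by (split; nra).
  set (M := (33 + 12 * sqrt 6) / 25 + cos a ^ 2).
  enough (cos (2 * b) * (1 - 3 * cos a ^ 2) + sin (2 * b) * (- 2 * cos O * sin a * (1 - cos a))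
          <= M) by (unfold M in *; lra).
  apply unit_dot_le.
  - pose proof (sin_cos_sqr (2 * b)). lra.
  - unfold M. pose proof (sqrt_pos 6). nra.
  - eapply Rle_trans; [| apply (max_envelope (cos a) (sqrt 6) H6 (sqrt_pos 6) Hx)].
    replace (1 - cos a ^ 2) with (sin a ^ 2) by (cbn [pow]; lra).
    assert (Hn : 0 <= (2 * sin a * (1 - cos a)) ^ 2 * (sin O * sin O))
      by (apply Rmult_le_pos; [apply pow2_ge_0 | apply Rle_0_sqr]).
    replace (sin O * sin O) with (1 - cos O * cos O) in Hn by lra.
    lra.
Qed.

Lemma branch_x2_value_saddle p : branch_point p x2 -> F p = 1 / 4 /\ saddle F p.
Proof.
  intro Hb. destruct sqrt5_bounds as [_ B5].
  split; [exact (branch_point_value_quad2 p x2 Hb quad2_x2) |].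
  apply (branch_point_saddle p x2 Hb), hess_det_num_neg_quad2; [exact quad2_x2 | unfold x2; lra].
Qed.

Lemma branch_x3_value_saddle p : branch_point p x3 ->
  F p = 3 / 50 * (9 - sqrt 6) /\ saddle F p.
Proof.
  intro Hb. destruct sqrt6_bounds as [_ B6].
  split.
  - rewrite (branch_point_value_quad34 p x3 Hb quad34_x3). unfold x3. field.
  - apply (branch_point_saddle p x3 Hb), hess_det_num_neg_quad34;
      [exact quad34_x3 | unfold x3; lra].
Qed.

Lemma branch_x4_value p : branch_point p x4 -> F p = 3 / 50 * (9 + sqrt 6).
Proof.
  intro Hb. rewrite (branch_point_value_quad34 p x4 Hb quad34_x4). unfold x4. field.
Qed.

Lemma cos_neg_PI2 : cos (- (PI / 2)) = 0.
Proof. rewrite cos_neg. exact cos_PI2. Qed.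

Lemma critical_iff_listed p : dom p ->
  (critical F p <->
   p = P1a \/ p = P1b \/ p = P2a \/ p = P2b \/ p = P3a \/ p = P3b \/ p = P4a \/ p = P4b).
Proof.
  intro Hd. split.
  - destruct p as [[O a] b]. intro Hc.
    destruct (critical_cases O a b Hd Hc) as [(HcO & -> & ->) | Hb].
    + destruct (cos_eq_0_turn O (proj1 Hd) HcO) as [-> | ->]; [left | right; left]; reflexivity.
    + do 2 right. exact (branch_point_listed _ _ Hd Hb).
  - intros [-> | [-> | [-> | [-> | [-> | [-> | [-> | ->]]]]]]].
    + exact (ortho_point_critical _ cos_PI2).
    + exact (ortho_point_critical _ cos_neg_PI2).
    + exact (branch_point_critical _ _ (proj2 P2a_branch)).
    + exact (branch_point_critical _ _ (proj2 P2b_branch)).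
    + exact (branch_point_critical _ _ (proj2 P3a_branch)).
    + exact (branch_point_critical _ _ (proj2 P3b_branch)).
    + exact (branch_point_critical _ _ (proj2 P4a_branch)).
    + exact (branch_point_critical _ _ (proj2 P4b_branch)).
Qed.

Theorem lemma1 :
  (dom P1a /\ dom P1b /\ dom P2a /\ dom P2b /\
   dom P3a /\ dom P3b /\ dom P4a /\ dom P4b) /\
  (forall p : pt, dom p ->
     (critical F p <->
      p = P1a \/ p = P1b \/ p = P2a \/ p = P2b \/
      p = P3a \/ p = P3b \/ p = P4a \/ p = P4b)) /\
  F P1a = 1/4 /\ F P1b = 1/4 /\ saddle F P1a /\ saddle F P1b /\
  F P2a = 1/4 /\ F P2b = 1/4 /\ saddle F P2a /\ saddle F P2b /\
  F P3a = 3/50 * (9 - sqrt 6) /\ F P3b = 3/50 * (9 - sqrt 6) /\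
  saddle F P3a /\ saddle F P3b /\
  F P4a = 3/50 * (9 + sqrt 6) /\ F P4b = 3/50 * (9 + sqrt 6) /\
  (forall p : pt, dom p -> F p <= F P4a) /\
  (forall p : pt, dom p -> F p <= F P4b).
Proof.
  assert (D1a : dom P1a) by (unfold dom, P1a; simpl; pose proof PI_RGT_0; lra).
  assert (D1b : dom P1b) by (unfold dom, P1b; simpl; pose proof PI_RGT_0; lra).
  destruct P2a_branch as [D2a B2a], P2b_branch as [D2b B2b], P3a_branch as [D3a B3a],
    P3b_branch as [D3b B3b], P4a_branch as [D4a B4a], P4b_branch as [D4b B4b].
  destruct (branch_x2_value_saddle _ B2a), (branch_x2_value_saddle _ B2b),
    (branch_x3_value_saddle _ B3a), (branch_x3_value_saddle _ B3b).
  pose proof (branch_x4_value _ B4a) as V4a. pose proof (branch_x4_value _ B4b) as V4b.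
  split; [tauto | split; [exact critical_iff_listed |]].
  rewrite V4a, V4b.
  change P1a with (ortho_point (PI / 2)). change P1b with (ortho_point (- (PI / 2))).
  repeat match goal with |- _ /\ _ => split end;
    auto using ortho_point_value, ortho_point_saddle, cos_PI2, cos_neg_PI2, F_le_max.
Qed.
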